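(* Let $Z$ be a bounded metric space with $\operatorname{diam}Z>0$ and $Y=\operatorname{Co}(Z)$. Then $Y$ is $\delta$-hyperbolic with $\delta=\delta(\mathrm H^2)$ the hyperbolicity constant of the hyperbolic plane; identifying each $z\in Z$ with the point at infinity represented by the ray $t\mapsto(z,t)$ gives an inclusion $Z\subset\partial_\infty Y$, and the metric of $Z$ is visual on $Z$ (with respect to the vertex $o$ and parameter $a=e$, i.e. there are $c_1,c_2>0$ with $c_1e^{-(z|z')_o}\le|zz'|\le c_2e^{-(z|z')_o}$ for $z,z'\in Z$). If in addition $Z$ is complete, then $\partial_\infty Y=Z$.
   Context: Hyperbolic cone: with $\mu=\pi/\operatorname{diam}Z$, $\operatorname{Co}(Z)=Z\times[0,\infty)/(Z\times\{0\})$ with metric: $|(z,t)(z',t')|$ is the length of the side $\bar x\bar x'$ of a triangle $\bar o\bar x\bar x'\subset\mathrm H^2$ with $|\bar o\bar x|=t$, $|\bar o\bar x'|=t'$ and angle $\mu|zz'|$ at $\bar o$; the vertex is $o=Z\times\{0\}$. Gromov product $(x|x')_o=\frac12(|xo|+|x'o|-|xx'|)$. $X$ is $\delta$-hyperbolic if $(x|x'')_o\ge\min\{(x|x')_o,(x'|x'')_o\}-\delta$ for all $x,x',x''$ (for a base point $o$). Sequences converging to infinity: $(x_i|x_j)_o\to\infty$; equivalence: $(x_i|x_i')_o\to\infty$; $\partial_\infty X$ is the set of classes, with $(\xi|\xi')_o=\inf\liminf_i(x_i|x_i')_o$ over representatives. A metric $d$ on (a subset of) $\partial_\infty X$ is visual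 if there are $o$, $a>1$, $c_1,c_2>0$ with $c_1a^{-(\xi|\xi')_o}\le d(\xi,\xi')\le c_2a^{-(\xi|\xi')_o}$. *)

From Stdlib Require Import Reals.
From Coquelicot Require Import Coquelicot.
Open Scope R_scope.

Definition arcosh (x : R) : R := ln (x + sqrt (x * x - 1)).

Definition is_metric {Z : Type} (d : Z -> Z -> R) : Prop :=
  (forall x y, d x y = 0 <-> x = y) /\
  (forall x y, d x y = d y x) /\
  (forall x y z, d x z <= d x y + d y z).

Definition complete_metric {Z : Type} (d : Z -> Z -> R) : Prop :=
  forall u : nat -> Z,
    (forall eps, 0 < eps -> exists N, forall m n, (N <= m)%nat -> (N <= n)%nat -> d (u m) (u n) < eps) ->
    exists z, forall eps, 0 < eps -> exists N, forall n, (N <= n)%nat -> d (u n) z < eps.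

Definition gprod {X : Type} (dist : X -> X -> R) (o x y : X) : R :=
  (dist x o + dist y o - dist x y) / 2.

Definition gromov_hyperbolic {X : Type} (dist : X -> X -> R) (delta : R) : Prop :=
  exists o : X, forall x x' x'' : X,
    gprod dist o x x'' >= Rmin (gprod dist o x x') (gprod dist o x' x'') - delta.

Definition H2 : Type := { p : R * R | 0 < snd p }.
Definition H2dist (p q : H2) : R :=
  let (x1, y1) := proj1_sig p in
  let (x2, y2) := proj1_sig q in
  arcosh (1 + ((x1 - x2) ^ 2 + (y1 - y2) ^ 2) / (2 * y1 * y2)).

Definition delta_H2 : R := real (Glb_Rbar (fun delta => gromov_hyperbolic H2dist delta)).

(* Hyperbolic cone Co(Z) = Z x [0,oo) / (Z x {0}); vertex = None, (z,t) with t>0 = Some (z,t) *)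
Definition cone (Z : Type) : Type := option (Z * posreal).
Definition vertex {Z : Type} : cone Z := None.
Definition ray_pt {Z : Type} (z : Z) (n : nat) : cone Z :=
  match n with
  | O => None
  | S k => Some (z, mkposreal (INR (S k)) (lt_0_INR (S k) (PeanoNat.Nat.lt_0_succ k)))
  end.

(* D = diam Z, mu = PI / D; side of H^2-triangle with sides t, t' and angle mu*|zz'| *)
Definition cone_dist {Z : Type} (d : Z -> Z -> R) (D : R) (p q : cone Z) : R :=
  match p, q with
  | None, None => 0
  | None, Some (_, t) => pos t
  | Some (_, t), None => pos t
  | Some (z, t), Some (z', t') =>
      arcosh (cosh t * cosh t' - sinh t * sinh t' * cos (PI / D * d z z'))
  end.

Definition conv_infty {X : Type} (dist : X -> X -> R) (o : X) (x : nat -> X) : Prop :=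
  forall M, exists N, forall i j, (N <= i)%nat -> (N <= j)%nat -> gprod dist o (x i) (x j) > M.

Definition seq_equiv {X : Type} (dist : X -> X -> R) (o : X) (x y : nat -> X) : Prop :=
  forall M, exists N, forall i, (N <= i)%nat -> gprod dist o (x i) (y i) > M.

Definition gprod_infty {X : Type} (dist : X -> X -> R) (o : X) (x y : nat -> X) : Rbar :=
  Rbar_glb (fun r => exists x' y' : nat -> X,
    conv_infty dist o x' /\ conv_infty dist o y' /\
    seq_equiv dist o x x' /\ seq_equiv dist o y y' /\
    r = LimInf_seq (fun i => gprod dist o (x' i) (y' i))).

(* a^{-g} for g in the extended reals, a = e: e^{-oo} = 0 (value at -oo is irrelevant:
   Gromov products based at o are >= 0) *)
Definition exp_neg (g : Rbar) : R :=
  match g with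
  | Finite r => exp (- r)
  | p_infty => 0
  | m_infty => 0
  end.

From Stdlib Require Import Reals Lra Lia Psatz Classical.
From Coquelicot Require Import Coquelicot.
Open Scope R_scope.

(* Seen from the vertex, two cone points at heights [t], [t'] over base points at angle
   [th = PI |zz'| / diam Z] have the Gromov product of two points of H^2 at distances [t], [t']
   from a base point under the angle [th], namely
   [G(t, t', s) = (t + t' - arcosh (cosh t cosh t' - sinh t sinh t' (1 - s))) / 2] with
   [s = 1 - cos th].  Since [G] decreases in [s] and angles in [Z] satisfy the triangle
   inequality, any three cone points can be laid out in H^2 with the same or smaller products,
   so every hyperbolicity constant of H^2 also works for the cone.  Quantitatively, [exp (-2 G)]
   is comparable up to a factor 2 with [(a^2 + a'^2)/2 + (1 - a^2)(1 - a'^2) s / 4], where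
   [a = exp (- t)], [a' = exp (- t')].  Along rays this is about [s], itself between [th^2/16]
   and [th^2], which gives the visual bounds [exp (- (z|z')) ~ th ~ |zz'|]; for a sequence
   converging to infinity it forces the base points to form a Cauchy sequence, whose limit
   represents the same boundary point. *)

Lemma exp_le x y : x <= y -> exp x <= exp y.
Proof. intros h. destruct (Req_dec x y) as [->|]; [lra | left; apply exp_increasing; lra]. Qed.

Lemma exp_le_inv x y : exp x <= exp y -> x <= y.
Proof.
  intros h. destruct (Rle_dec x y) as [|n]; [easy|].
  pose proof (exp_increasing y x ltac:(lra)). lra.
Qed.

Lemma exp_neg_le_1 t : 0 <= t -> 0 < exp (-t) <= 1.
Proof. intros. split; [apply exp_pos|]. rewrite <- exp_0. apply exp_le. lra. Qed.

Lemma exp_neg2_lt_iff x e : 0 < e -> exp (-2 * x) < e <-> - ln e / 2 < x.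
Proof.
  intros he. pose proof (exp_ln e he) as E. split; intros h.
  - rewrite <- E in h. apply exp_lt_inv in h. lra.
  - rewrite <- E. apply exp_increasing. lra.
Qed.

Lemma exp_neg2_le_iff x e : 0 < e -> exp (-2 * x) <= e <-> - ln e / 2 <= x.
Proof.
  intros he. pose proof (exp_ln e he) as E. split; intros h.
  - rewrite <- E in h. apply exp_le_inv in h. lra.
  - rewrite <- E. apply exp_le. lra.
Qed.

Lemma le_exp_neg2_iff x e : 0 < e -> e <= exp (-2 * x) <-> x <= - ln e / 2.
Proof.
  intros he. pose proof (exp_ln e he) as E. split; intros h.
  - rewrite <- E in h. apply exp_le_inv in h. lra.
  - rewrite <- E. apply exp_le. lra.
Qed.

Lemma exp_arcosh v : 1 <= v -> exp (arcosh v) = v + sqrt (v * v - 1).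
Proof. intros. unfold arcosh. apply exp_ln. pose proof (sqrt_pos (v * v - 1)). lra. Qed.

Lemma arcosh_exp_bounds v : 1 <= v -> v <= exp (arcosh v) <= 2 * v.
Proof.
  intros hv. rewrite exp_arcosh by exact hv. pose proof (sqrt_pos (v * v - 1)).
  assert (sqrt (v * v - 1) <= sqrt (v * v)) by (apply sqrt_le_1_alt; lra).
  rewrite sqrt_square in H0 by lra. lra.
Qed.

Lemma arcosh_nonneg v : 1 <= v -> 0 <= arcosh v.
Proof.
  intros hv. apply exp_le_inv. rewrite exp_0. pose proof (arcosh_exp_bounds v hv). lra.
Qed.

Lemma arcosh_le v v' : 1 <= v -> v <= v' -> arcosh v <= arcosh v'.
Proof.
  intros hv hvv'. unfold arcosh. apply ln_le.
  - pose proof (sqrt_pos (v * v - 1)). lra.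
  - assert (sqrt (v * v - 1) <= sqrt (v' * v' - 1)) by (apply sqrt_le_1_alt; nra). lra.
Qed.

Lemma cosh_sq_sub_1 x : cosh x * cosh x - 1 = sinh x * sinh x.
Proof. unfold cosh, sinh. rewrite exp_Ropp. pose proof (exp_pos x). field. lra. Qed.

Lemma sinh_nonneg x : 0 <= x -> 0 <= sinh x.
Proof. intros. unfold sinh. assert (exp (- x) <= exp x) by (apply exp_le; lra). lra. Qed.

Lemma arcosh_cosh x : 0 <= x -> arcosh (cosh x) = x.
Proof.
  intros. unfold arcosh. rewrite cosh_sq_sub_1, sqrt_square by (apply sinh_nonneg; auto).
  replace (cosh x + sinh x) with (exp x) by (unfold cosh, sinh; field). apply ln_exp.
Qed.

Lemma cosh_sinh_arcosh v : 1 <= v -> cosh (arcosh v) = v /\ sinh (arcosh v) = sqrt (v * v - 1).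
Proof.
  intros hv. unfold cosh, sinh. rewrite exp_Ropp, exp_arcosh by exact hv.
  pose proof (sqrt_sqrt (v * v - 1) ltac:(nra)). pose proof (sqrt_pos (v * v - 1)).
  set (q := sqrt (v * v - 1)) in *.
  assert (/ (v + q) = v - q) as ->.
  { apply (Rmult_eq_reg_l (v + q)); [rewrite Rinv_r by lra; nra | lra]. }
  split; field.
Qed.

Lemma cosh_sub a b : cosh a * cosh b - sinh a * sinh b = cosh (a - b).
Proof.
  unfold cosh, sinh. replace (a - b) with (a + - b) by ring.
  replace (- (a + - b)) with (- a + b) by ring. rewrite !exp_plus. field.
Qed.

Lemma cosh_opp x : cosh (- x) = cosh x.
Proof. unfold cosh. rewrite Ropp_involutive. lra. Qed.

Lemma one_sub_cos_bounds th : 0 <= th <= PI -> th ^ 2 / 16 <= 1 - cos th <= th ^ 2.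
Proof.
  intros hth. pose proof PI_4. pose proof PI2_3_2.
  destruct (Rle_dec th (PI / 2)) as [hle|hgt].
  - pose proof (cos_bound th 0 ltac:(lra) hle) as hc.
    unfold cos_approx, cos_term in hc. simpl in hc.
    assert (th ^ 2 <= 4) by nra. assert (0 <= th ^ 2) by nra.
    assert (th ^ 4 = th ^ 2 * th ^ 2) by ring.
    match type of hc with ?lo <= _ <= ?hi =>
      replace lo with (1 - th ^ 2 / 2) in hc by field;
      replace hi with (1 - th ^ 2 / 2 + th ^ 4 / 24) in hc by field end.
    nra.
  - assert (cos th <= 0) by (apply cos_le_0; lra). pose proof (COS_bound th).
    assert (th ^ 2 <= 16) by nra. assert (th ^ 2 >= 2) by nra. lra.
Qed.

(* Gromov product, seen from [o], of two points at distances [t], [t'] from [o] under an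
   angle [th], where [s = 1 - cos th]: [cosh_side] is the hyperbolic law of cosines. *)
Definition cosh_side (t t' s : R) : R := cosh t * cosh t' - sinh t * sinh t' * (1 - s).
Definition gprod_model (t t' s : R) : R := (t + t' - arcosh (cosh_side t t' s)) / 2.

Definition gprod_proxy (a a' s : R) : R :=
  (a * a + a' * a') / 2 + (1 - a * a) * (1 - a' * a') * s / 4.

(* [exp (2 * delta_proxy) = 2 * 5 * 2]: the factor 2 of [exp_gprod_model_proxy], the factor 5 of
   the quasi-triangle inequality for the proxy, and 2 to bound a sum of two terms by twice the
   larger one. *)
Definition delta_proxy : R := ln 20 / 2.

Lemma cosh_side_proxy t t' s :
  cosh_side t t' s * (exp (- t) * exp (- t')) = gprod_proxy (exp (- t)) (exp (- t')) s.
Proof.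
  unfold cosh_side, gprod_proxy, cosh, sinh. rewrite !exp_Ropp.
  pose proof (exp_pos t). pose proof (exp_pos t'). field. lra.
Qed.

Lemma cosh_side_ge_1 t t' s : 0 <= t -> 0 <= t' -> 0 <= s -> 1 <= cosh_side t t' s.
Proof.
  intros ht ht' hs. pose proof (cosh_side_proxy t t' s) as E.
  pose proof (exp_neg_le_1 t ht). pose proof (exp_neg_le_1 t' ht').
  set (a := exp (- t)) in *. set (a' := exp (- t')) in *. clearbody a a'.
  unfold gprod_proxy in E. apply (Rmult_le_reg_r (a * a')); [nra|].
  rewrite E. assert (0 <= (1 - a * a) * (1 - a' * a') * s) by (apply Rmult_le_pos; [apply Rmult_le_pos|]; nra).
  pose proof (Rle_0_sqr (a - a')). unfold Rsqr in *. nra.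
Qed.

Lemma exp_gprod_model_proxy t t' s : 0 <= t -> 0 <= t' -> 0 <= s ->
  gprod_proxy (exp (- t)) (exp (- t')) s <= exp (-2 * gprod_model t t' s)
  <= 2 * gprod_proxy (exp (- t)) (exp (- t')) s.
Proof.
  intros ht ht' hs. rewrite <- cosh_side_proxy. unfold gprod_model.
  replace (-2 * ((t + t' - arcosh (cosh_side t t' s)) / 2))
    with (arcosh (cosh_side t t' s) + - t + - t') by field.
  rewrite !exp_plus. pose proof (arcosh_exp_bounds _ (cosh_side_ge_1 t t' s ht ht' hs)).
  pose proof (exp_pos (- t)). pose proof (exp_pos (- t')).
  assert (0 < exp (- t) * exp (- t')) by nra. nra.
Qed.

Lemma gprod_proxy_quasi_triangle a1 a2 a3 s12 s23 s13 :
  0 < a1 <= 1 -> 0 < a2 <= 1 -> 0 < a3 <= 1 ->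
  0 <= s12 <= 2 -> 0 <= s23 <= 2 -> 0 <= s13 -> s13 <= 2 * (s12 + s23) ->
  gprod_proxy a1 a3 s13 <= 5 * (gprod_proxy a1 a2 s12 + gprod_proxy a2 a3 s23).
Proof.
  intros ha1 ha2 ha3 h12 h23 h13 htri. unfold gprod_proxy.
  assert (0 <= 1 - a1 * a1 <= 1) by (split; nra).
  assert (0 <= 1 - a2 * a2 <= 1) by (split; nra).
  assert (0 <= 1 - a3 * a3 <= 1) by (split; nra).
  (* Trading the factor [1 - a3 a3] in front of [s12] for [1 - a2 a2] costs at most [2 a2 a2]. *)
  assert (shift : forall A C u s, 0 <= A <= 1 -> 0 <= C <= 1 -> 0 <= u -> 0 <= s <= 2 ->
            A * C * s <= A * (1 - u) * s + 2 * u).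
  { intros A C u s hA hC hu hs'.
    assert (A * C * s <= A * s) by (apply Rmult_le_compat_r; nra).
    assert (A * u * s <= u * s) by (apply Rmult_le_compat_r; nra). nra. }
  pose proof (shift (1 - a1 * a1) (1 - a3 * a3) (a2 * a2) s12 ltac:(lra) ltac:(lra) ltac:(nra) h12).
  pose proof (shift (1 - a3 * a3) (1 - a1 * a1) (a2 * a2) s23 ltac:(lra) ltac:(lra) ltac:(nra) h23).
  assert (0 <= (1 - a1 * a1) * (1 - a3 * a3)) by (apply Rmult_le_pos; lra).
  assert (0 <= (1 - a1 * a1) * (1 - a2 * a2) * s12) by (apply Rmult_le_pos; [apply Rmult_le_pos|]; nra).
  assert (0 <= (1 - a2 * a2) * (1 - a3 * a3) * s23) by (apply Rmult_le_pos; [apply Rmult_le_pos|]; nra).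
  nra.
Qed.

Lemma gprod_model_hyperbolic t1 t2 t3 s12 s23 s13 :
  0 <= t1 -> 0 <= t2 -> 0 <= t3 ->
  0 <= s12 <= 2 -> 0 <= s23 <= 2 -> 0 <= s13 -> s13 <= 2 * (s12 + s23) ->
  gprod_model t1 t3 s13 >= Rmin (gprod_model t1 t2 s12) (gprod_model t2 t3 s23) - delta_proxy.
Proof.
  intros ht1 ht2 ht3 h12 h23 h13 htri.
  pose proof (gprod_proxy_quasi_triangle _ _ _ _ _ _ (exp_neg_le_1 t1 ht1) (exp_neg_le_1 t2 ht2)
                (exp_neg_le_1 t3 ht3) h12 h23 h13 htri).
  pose proof (exp_gprod_model_proxy t1 t3 s13 ht1 ht3 h13).
  pose proof (exp_gprod_model_proxy t1 t2 s12 ht1 ht2 (proj1 h12)).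
  pose proof (exp_gprod_model_proxy t2 t3 s23 ht2 ht3 (proj1 h23)).
  set (m := Rmin (gprod_model t1 t2 s12) (gprod_model t2 t3 s23)).
  assert (exp (-2 * gprod_model t1 t2 s12) <= exp (-2 * m))
    by (apply exp_le; unfold m; pose proof (Rmin_l (gprod_model t1 t2 s12) (gprod_model t2 t3 s23)); lra).
  assert (exp (-2 * gprod_model t2 t3 s23) <= exp (-2 * m))
    by (apply exp_le; unfold m; pose proof (Rmin_r (gprod_model t1 t2 s12) (gprod_model t2 t3 s23)); lra).
  assert (exp (-2 * gprod_model t1 t3 s13) <= exp (ln 20 + -2 * m)).
  { rewrite exp_plus, exp_ln by lra. lra. }
  apply exp_le_inv in H5. unfold delta_proxy. lra.
Qed.

Lemma gprod_model_antitone t t' s s' : 0 <= t -> 0 <= t' -> 0 <= s -> s <= s' ->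
  gprod_model t t' s' <= gprod_model t t' s.
Proof.
  intros ht ht' hs hss'. unfold gprod_model.
  assert (arcosh (cosh_side t t' s) <= arcosh (cosh_side t t' s')); [|lra].
  apply arcosh_le; [now apply cosh_side_ge_1|]. unfold cosh_side.
  assert (0 <= sinh t * sinh t') by (apply Rmult_le_pos; now apply sinh_nonneg). nra.
Qed.

Lemma gprod_model_gap_0 t t' : 0 <= t -> 0 <= t' -> gprod_model t t' 0 = Rmin t t'.
Proof.
  intros ht ht'. unfold gprod_model, cosh_side. rewrite Rminus_0_r, Rmult_1_r, cosh_sub.
  unfold Rmin. destruct (Rle_dec t t').
  - replace (t - t') with (- (t' - t)) by ring. rewrite cosh_opp, arcosh_cosh by lra. field.
  - rewrite arcosh_cosh by lra. field.
Qed.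

Lemma exp_gprod_model_lower t t' s : 1 <= t -> 1 <= t' -> 0 <= s ->
  s / 16 <= exp (-2 * gprod_model t t' s).
Proof.
  intros ht ht' hs. pose proof (exp_gprod_model_proxy t t' s ltac:(lra) ltac:(lra) hs) as [E _].
  unfold gprod_proxy in E.
  assert (e2 : exp (-1) * exp (-1) <= 1 / 3).
  { rewrite <- exp_plus. replace (-1 + -1) with (- (2)) by ring. rewrite exp_Ropp.
    pose proof (exp_ineq1_le 2). pose proof (exp_pos 2).
    apply (Rmult_le_reg_l (exp 2)); [lra|]. rewrite Rinv_r by lra. lra. }
  assert (0 < exp (- t) <= exp (-1)) by (split; [apply exp_pos | apply exp_le; lra]).
  assert (0 < exp (- t') <= exp (-1)) by (split; [apply exp_pos | apply exp_le; lra]).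
  pose proof (exp_pos (-1)).
  set (a := exp (- t)) in *. set (b := exp (- t')) in *. clearbody a b.
  assert (a * a <= 1 / 3) by nra. assert (b * b <= 1 / 3) by nra.
  assert (4 / 9 <= (1 - a * a) * (1 - b * b)) by nra.
  assert (4 / 9 * s <= (1 - a * a) * (1 - b * b) * s) by nra. nra.
Qed.

Lemma exp_gprod_model_upper t t' s : 0 <= t -> 0 <= t' -> 0 <= s <= 2 ->
  exp (-2 * gprod_model t t' s) <= exp (-2 * t) + exp (-2 * t') + s / 2.
Proof.
  intros ht ht' hs. pose proof (exp_gprod_model_proxy t t' s ht ht' (proj1 hs)) as [_ E].
  unfold gprod_proxy in E.
  replace (-2 * t) with (- t + - t) by ring. replace (-2 * t') with (- t' + - t') by ring.
  rewrite !exp_plus.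
  pose proof (exp_neg_le_1 t ht). pose proof (exp_neg_le_1 t' ht').
  set (a := exp (- t)) in *. set (b := exp (- t')) in *. clearbody a b.
  assert (0 <= 1 - a * a <= 1) by (split; nra). assert (0 <= 1 - b * b <= 1) by (split; nra).
  assert (0 <= (1 - a * a) * (1 - b * b) <= 1) by (split; [apply Rmult_le_pos|]; nra).
  assert ((1 - a * a) * (1 - b * b) * s <= s) by nra. lra.
Qed.

(* The fallback value [1] only makes [H2_polar] total: for [0 <= t] and [c <= 1] the
   denominator [cosh t - sinh t * c] is already positive (see [polar_den_eq]). *)
Definition polar_den (t c : R) : R :=
  if Rlt_dec 0 (cosh t - sinh t * c) then cosh t - sinh t * c else 1.

Lemma polar_den_pos t c : 0 < polar_den t c.
Proof. unfold polar_den. destruct (Rlt_dec 0 (cosh t - sinh t * c)); lra. Qed.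

Lemma polar_den_eq t c : 0 <= t -> c <= 1 -> polar_den t c = cosh t - sinh t * c.
Proof.
  intros ht hc. unfold polar_den. destruct (Rlt_dec 0 (cosh t - sinh t * c)) as [|n]; [easy|].
  exfalso. apply n. pose proof (sinh_nonneg t ht).
  assert (cosh t - sinh t = exp (- t)) by (unfold cosh, sinh; field).
  pose proof (exp_pos (- t)). nra.
Qed.

Lemma H2_polar_pos (o : H2) t c s :
  0 < snd (fst (proj1_sig o) - snd (proj1_sig o) * (sinh t * s) / polar_den t c,
           snd (proj1_sig o) / polar_den t c).
Proof. apply Rdiv_lt_0_compat; [exact (proj2_sig o) | apply polar_den_pos]. Qed.

(* The point at distance [t] from [o] in the unit direction [(c, s)], [c] measured along the
   upward vertical: the image under [z |-> x_o + y_o z] of the corresponding point for [o = i]. *)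
Definition H2_polar (o : H2) (t c s : R) : H2 :=
  exist _ (fst (proj1_sig o) - snd (proj1_sig o) * (sinh t * s) / polar_den t c,
           snd (proj1_sig o) / polar_den t c) (H2_polar_pos o t c s).

Lemma H2dist_coords (p q : H2) : H2dist p q =
  arcosh (1 + ((fst (proj1_sig p) - fst (proj1_sig q)) ^ 2
               + (snd (proj1_sig p) - snd (proj1_sig q)) ^ 2)
              / (2 * snd (proj1_sig p) * snd (proj1_sig q))).
Proof. unfold H2dist. destruct (proj1_sig p), (proj1_sig q). reflexivity. Qed.

Lemma H2dist_ext (p p' q q' : H2) :
  proj1_sig p = proj1_sig p' -> proj1_sig q = proj1_sig q' -> H2dist p q = H2dist p' q'.
Proof. intros ep eq. rewrite !H2dist_coords, ep, eq. reflexivity. Qed.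

Lemma cosine_law_identity C1 S1 c1 s1 C2 S2 c2 s2 :
  C1 * C1 - S1 * S1 = 1 -> C2 * C2 - S2 * S2 = 1 ->
  c1 * c1 + s1 * s1 = 1 -> c2 * c2 + s2 * s2 = 1 ->
  (S2 * s2 * (C1 - S1 * c1) - S1 * s1 * (C2 - S2 * c2)) ^ 2 + ((C2 - S2 * c2) - (C1 - S1 * c1)) ^ 2
  = 2 * (C1 - S1 * c1) * (C2 - S2 * c2) * (C1 * C2 - S1 * S2 * (c1 * c2 + s1 * s2) - 1).
Proof.
  intros hC1 hC2 hc1 hc2.
  assert (e1 : S1 * S1 * (s1 * s1) = C1 * C1 - 1 - S1 * S1 * (c1 * c1)).
  { replace (s1 * s1) with (1 - c1 * c1) by lra. replace (C1 * C1) with (1 + S1 * S1) by lra. ring. }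
  assert (e2 : S2 * S2 * (s2 * s2) = C2 * C2 - 1 - S2 * S2 * (c2 * c2)).
  { replace (s2 * s2) with (1 - c2 * c2) by lra. replace (C2 * C2) with (1 + S2 * S2) by lra. ring. }
  set (d1 := C1 - S1 * c1). set (d2 := C2 - S2 * c2).
  replace ((S2 * s2 * d1 - S1 * s1 * d2) ^ 2 + (d2 - d1) ^ 2) with
    (d1 * d1 * (S2 * S2 * (s2 * s2) + 1) + d2 * d2 * (S1 * S1 * (s1 * s1) + 1)
     - 2 * d1 * d2 * (1 + S1 * S2 * s1 * s2)) by ring.
  rewrite e1, e2. unfold d1, d2. ring.
Qed.

Lemma H2dist_polar (o : H2) t1 c1 s1 t2 c2 s2 : 0 <= t1 -> 0 <= t2 ->
  c1 * c1 + s1 * s1 = 1 -> c2 * c2 + s2 * s2 = 1 ->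
  H2dist (H2_polar o t1 c1 s1) (H2_polar o t2 c2 s2) =
  arcosh (cosh t1 * cosh t2 - sinh t1 * sinh t2 * (c1 * c2 + s1 * s2)).
Proof.
  intros ht1 ht2 hu1 hu2. rewrite H2dist_coords. unfold H2_polar. cbn [proj1_sig fst snd]. f_equal.
  pose proof (polar_den_pos t1 c1) as P1. pose proof (polar_den_pos t2 c2) as P2.
  rewrite !polar_den_eq in * by nra.
  pose proof (proj2_sig o) as Pb. simpl in Pb.
  set (b := snd (proj1_sig o)) in *. set (a := fst (proj1_sig o)).
  pose proof (cosine_law_identity (cosh t1) (sinh t1) c1 s1 (cosh t2) (sinh t2) c2 s2
                ltac:(pose proof (cosh_sq_sub_1 t1); lra) ltac:(pose proof (cosh_sq_sub_1 t2); lra)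
                hu1 hu2) as L.
  set (d1 := cosh t1 - sinh t1 * c1) in *. set (d2 := cosh t2 - sinh t2 * c2) in *.
  apply (Rmult_eq_reg_r (2 * d1 * d2)).
  2:{ apply Rgt_not_eq. apply Rmult_lt_0_compat; [apply Rmult_lt_0_compat|]; lra. }
  replace ((1 + ((a - b * (sinh t1 * s1) / d1 - (a - b * (sinh t2 * s2) / d2)) ^ 2
                 + (b / d1 - b / d2) ^ 2) / (2 * (b / d1) * (b / d2))) * (2 * d1 * d2))
    with (2 * d1 * d2 + ((sinh t2 * s2 * d1 - sinh t1 * s1 * d2) ^ 2 + (d2 - d1) ^ 2))
    by (field; repeat split; lra).
  rewrite L. ring.
Qed.

Lemma H2dist_polar_center (o : H2) t c s : 0 <= t -> c * c + s * s = 1 ->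
  H2dist (H2_polar o t c s) o = t.
Proof.
  intros ht hu.
  assert (center : proj1_sig (H2_polar o 0 1 0) = proj1_sig o).
  { unfold H2_polar. cbn [proj1_sig]. rewrite polar_den_eq, cosh_0, sinh_0 by lra.
    destruct (proj1_sig o). simpl. f_equal; field. }
  rewrite (H2dist_ext _ (H2_polar o t c s) _ (H2_polar o 0 1 0)), H2dist_polar by (auto; lra).
  rewrite cosh_0, sinh_0. replace (cosh t * 1 - sinh t * 0 * (c * 1 + s * 0)) with (cosh t) by ring.
  now apply arcosh_cosh.
Qed.

Lemma H2_gprod_polar (o : H2) t1 c1 s1 t2 c2 s2 : 0 <= t1 -> 0 <= t2 ->
  c1 * c1 + s1 * s1 = 1 -> c2 * c2 + s2 * s2 = 1 ->
  gprod H2dist o (H2_polar o t1 c1 s1) (H2_polar o t2 c2 s2)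
  = gprod_model t1 t2 (1 - (c1 * c2 + s1 * s2)).
Proof.
  intros. unfold gprod, gprod_model, cosh_side.
  rewrite !H2dist_polar_center, H2dist_polar by auto.
  replace (1 - (1 - (c1 * c2 + s1 * s2))) with (c1 * c2 + s1 * s2) by ring. reflexivity.
Qed.

Lemma H2_i_pos : 0 < snd (0, 1). Proof. simpl; lra. Qed.
Definition H2_i : H2 := exist _ (0, 1) H2_i_pos.

Lemma H2_polar_surj (p : H2) :
  exists t c s, 0 <= t /\ c * c + s * s = 1 /\ proj1_sig p = proj1_sig (H2_polar H2_i t c s).
Proof.
  destruct p as [[x y] hy]. simpl in hy.
  set (v := (x * x + y * y + 1) / (2 * y)).
  assert (hv : 1 <= v).
  { unfold v. apply (Rmult_le_reg_r (2 * y)); [lra|].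
    unfold Rdiv. rewrite Rmult_assoc, Rinv_l by lra.
    pose proof (Rle_0_sqr x). pose proof (Rle_0_sqr (y - 1)). unfold Rsqr in *. nra. }
  destruct (cosh_sinh_arcosh v hv) as [hc hs].
  pose proof (sqrt_pos (v * v - 1)) as hq0. pose proof (sqrt_sqrt (v * v - 1) ltac:(nra)) as hq.
  set (q := sqrt (v * v - 1)) in *.
  exists (arcosh v).
  destruct (Req_dec q 0) as [q0|q0].
  -
    exists 1, 0. split; [now apply arcosh_nonneg|]. split; [ring|].
    assert (v1 : v = 1) by nra.
    assert (x = 0 /\ y = 1) as [-> ->].
    { assert (x * x + y * y + 1 = 2 * y).
      { unfold v in v1. replace (x * x + y * y + 1) with ((x * x + y * y + 1) / (2 * y) * (2 * y))
          by (field; lra). rewrite v1. ring. }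
      pose proof (Rle_0_sqr x). pose proof (Rle_0_sqr (y - 1)). unfold Rsqr in *. split; nra. }
    unfold H2_polar. cbn [proj1_sig fst snd].
    rewrite polar_den_eq, hc, hs, q0, v1 by (try apply arcosh_nonneg; lra). simpl. f_equal; field.
  - exists ((v - 1 / y) / q), (- x / (q * y)). split; [now apply arcosh_nonneg|]. split.
    + apply (Rmult_eq_reg_r (q * q * y * y)).
      2:{ apply Rgt_not_eq. repeat apply Rmult_lt_0_compat; lra. }
      field_simplify; [|split; lra]. replace (q ^ 2) with (v * v - 1) by (rewrite <- hq; ring).
      unfold v. field. lra.
    + assert (hd : cosh (arcosh v) - sinh (arcosh v) * ((v - 1 / y) / q) = 1 / y).
      { rewrite hc, hs. field. split; lra. }
      unfold H2_polar, polar_den. cbn [proj1_sig fst snd]. rewrite hd.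
      destruct (Rlt_dec 0 (1 / y)) as [_|n]; [|exfalso; apply n, Rdiv_lt_0_compat; lra].
      rewrite hs. simpl. f_equal; field; repeat split; lra.
Qed.

Lemma unit_gap_range c1 s1 c2 s2 : c1 * c1 + s1 * s1 = 1 -> c2 * c2 + s2 * s2 = 1 ->
  0 <= 1 - (c1 * c2 + s1 * s2) <= 2.
Proof.
  intros. pose proof (Rle_0_sqr (c1 - c2)). pose proof (Rle_0_sqr (s1 - s2)).
  pose proof (Rle_0_sqr (c1 + c2)). pose proof (Rle_0_sqr (s1 + s2)). unfold Rsqr in *. nra.
Qed.

Lemma unit_gap_quasi_triangle c1 s1 c2 s2 c3 s3 :
  c1 * c1 + s1 * s1 = 1 -> c2 * c2 + s2 * s2 = 1 -> c3 * c3 + s3 * s3 = 1 ->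
  1 - (c1 * c3 + s1 * s3) <= 2 * ((1 - (c1 * c2 + s1 * s2)) + (1 - (c2 * c3 + s2 * s3))).
Proof.
  intros. pose proof (Rle_0_sqr (c1 - 2 * c2 + c3)). pose proof (Rle_0_sqr (s1 - 2 * s2 + s3)).
  unfold Rsqr in *. nra.
Qed.

Lemma H2_hyperbolic : gromov_hyperbolic H2dist delta_proxy.
Proof.
  exists H2_i. intros p1 p2 p3.
  destruct (H2_polar_surj p1) as (t1 & c1 & s1 & ht1 & hu1 & e1).
  destruct (H2_polar_surj p2) as (t2 & c2 & s2 & ht2 & hu2 & e2).
  destruct (H2_polar_surj p3) as (t3 & c3 & s3 & ht3 & hu3 & e3).
  assert (G : forall a b a' b', proj1_sig a = proj1_sig a' -> proj1_sig b = proj1_sig b' ->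
                gprod H2dist H2_i a b = gprod H2dist H2_i a' b').
  { intros a b a' b' ea eb. unfold gprod.
    rewrite (H2dist_ext a a' H2_i H2_i), (H2dist_ext b b' H2_i H2_i), (H2dist_ext a a' b b'); auto. }
  rewrite (G p1 p3 _ _ e1 e3), (G p1 p2 _ _ e1 e2), (G p2 p3 _ _ e2 e3), !H2_gprod_polar by auto.
  apply gprod_model_hyperbolic; auto using unit_gap_range, unit_gap_quasi_triangle.
  now apply (unit_gap_range c1 s1 c3 s3).
Qed.

Lemma le_delta_H2 (x : R) :
  (forall delta, gromov_hyperbolic H2dist delta -> x <= delta) -> x <= delta_H2.
Proof.
  intros hx. unfold delta_H2.
  destruct (Glb_Rbar_correct (fun delta => gromov_hyperbolic H2dist delta)) as [lb glb].
  pose proof (lb delta_proxy H2_hyperbolic).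
  assert (Rbar_le x (Glb_Rbar (fun delta => gromov_hyperbolic H2dist delta)))
    by (apply glb; intros y hy; exact (hx y hy)).
  destruct (Glb_Rbar (fun delta => gromov_hyperbolic H2dist delta)); simpl in *; easy.
Qed.

(* Three points at distances [t1], [t2], [t3] seen from the base point under angles [th1], [th2]
   and at most [th1 + th2] are laid out in polar coordinates at angles [0], [th1] and
   [th1 + min th2 (PI - th1)]; [gprod_model] decreases in the gap. *)
Lemma gprod_model_hyperbolic_of_H2 (delta : R) : gromov_hyperbolic H2dist delta ->
  forall t1 t2 t3 th1 th2 th3, 0 <= t1 -> 0 <= t2 -> 0 <= t3 ->
  0 <= th1 <= PI -> 0 <= th2 <= PI -> 0 <= th3 <= PI -> th3 <= th1 + th2 ->
  gprod_model t1 t3 (1 - cos th3)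
  >= Rmin (gprod_model t1 t2 (1 - cos th1)) (gprod_model t2 t3 (1 - cos th2)) - delta.
Proof.
  intros [o Ho] t1 t2 t3 th1 th2 th3 ht1 ht2 ht3 hth1 hth2 hth3 htri.
  set (a2 := Rmin th2 (PI - th1)).
  assert (ha2 : 0 <= a2 <= th2 /\ th3 <= th1 + a2 <= PI)
    by (unfold a2, Rmin; destruct (Rle_dec th2 (PI - th1)); lra).
  assert (unit : forall th, cos th * cos th + sin th * sin th = 1)
    by (intros th; pose proof (sin2_cos2 th); unfold Rsqr in *; lra).
  pose proof (Ho (H2_polar o t1 1 0) (H2_polar o t2 (cos th1) (sin th1))
                 (H2_polar o t3 (cos (th1 + a2)) (sin (th1 + a2)))) as Hh.
  rewrite !H2_gprod_polar in Hh by (auto; lra).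
  replace (1 * cos th1 + 0 * sin th1) with (cos th1) in Hh by ring.
  replace (1 * cos (th1 + a2) + 0 * sin (th1 + a2)) with (cos (th1 + a2)) in Hh by ring.
  replace (cos th1 * cos (th1 + a2) + sin th1 * sin (th1 + a2)) with (cos a2) in Hh
    by (rewrite <- cos_minus, <- cos_neg; f_equal; ring).
  assert (gprod_model t1 t3 (1 - cos (th1 + a2)) <= gprod_model t1 t3 (1 - cos th3)).
  { apply gprod_model_antitone; auto; [pose proof (COS_bound th3); lra|].
    assert (cos (th1 + a2) <= cos th3) by (apply cos_decr_1; lra). lra. }
  assert (gprod_model t2 t3 (1 - cos th2) <= gprod_model t2 t3 (1 - cos a2)).
  { apply gprod_model_antitone; auto; [pose proof (COS_bound a2); lra|].
    assert (cos th2 <= cos a2) by (apply cos_decr_1; lra). lra. }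
  pose proof (Rle_min_compat_l _ _ (gprod_model t1 t2 (1 - cos th1)) H0). lra.
Qed.

Definition hyperbolic_at {X : Type} (dist : X -> X -> R) (o : X) (delta : R) : Prop :=
  forall x x' x'' : X,
    gprod dist o x x'' >= Rmin (gprod dist o x x') (gprod dist o x' x'') - delta.

Lemma Rbar_glb_is_glb (E : Rbar -> Prop) : Rbar_is_glb E (Rbar_glb E).
Proof. unfold Rbar_glb. now destruct Rbar_ex_glb. Qed.

Section BoundaryProducts.

Variables (X : Type) (dist : X -> X -> R) (o : X) (delta : R).
Hypothesis dist_sym : forall x y, dist x y = dist y x.
Hypothesis hyp : hyperbolic_at dist o delta.

Lemma gprod_comm x y : gprod dist o x y = gprod dist o y x.
Proof. unfold gprod. rewrite (dist_sym x y). field. Qed.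

Lemma hyperbolic_at_nonneg : 0 <= delta.
Proof. pose proof (hyp o o o). rewrite Rmin_left in H by lra. lra. Qed.

Lemma conv_infty_seq_equiv_refl x : conv_infty dist o x -> seq_equiv dist o x x.
Proof. intros hx M. destruct (hx M) as [N HN]. exists N. intros i hi. now apply HN. Qed.

Lemma gprod_infty_le_LimInf x y : conv_infty dist o x -> conv_infty dist o y ->
  Rbar_le (gprod_infty dist o x y) (LimInf_seq (fun i => gprod dist o (x i) (y i))).
Proof.
  intros hx hy. apply Rbar_glb_is_glb. exists x, y. repeat split; auto using conv_infty_seq_equiv_refl.
Qed.

(* Two applications of the four-point condition, through [x' ~ x] and [y' ~ y]. *)
Lemma gprod_infty_ge x y (L : R) :
  (exists N, forall i, (N <= i)%nat -> L <= gprod dist o (x i) (y i)) ->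
  Rbar_le (L - 2 * delta) (gprod_infty dist o x y).
Proof.
  intros [N0 HN0]. pose proof hyperbolic_at_nonneg.
  apply Rbar_glb_is_glb. intros e (x' & y' & _ & _ & ex & ey & ->).
  rewrite <- (LimInf_seq_const (L - 2 * delta)). apply LimInf_le.
  destruct (ex L) as [N1 H1]. destruct (ey L) as [N2 H2].
  exists (max N0 (max N1 N2)). intros i hi.
  specialize (H1 i ltac:(lia)). specialize (H2 i ltac:(lia)). specialize (HN0 i ltac:(lia)).
  pose proof (hyp (x' i) (x i) (y' i)). pose proof (hyp (x i) (y i) (y' i)).
  rewrite (gprod_comm (x' i) (x i)) in *.
  pose proof (Rmin_glb (gprod dist o (x i) (y i)) (gprod dist o (y i) (y' i)) L ltac:(lra) ltac:(lra)).
  pose proof (Rmin_glb (gprod dist o (x i) (x' i)) (gprod dist o (x i) (y' i)) (L - delta)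
                ltac:(lra) ltac:(lra)).
  lra.
Qed.

Lemma gprod_infty_equiv x y : seq_equiv dist o x y -> gprod_infty dist o x y = p_infty.
Proof.
  intros hxy.
  assert (all : forall M : R, Rbar_le M (gprod_infty dist o x y)).
  { intros M. replace M with (M + 2 * delta - 2 * delta) by ring. apply gprod_infty_ge.
    destruct (hxy (M + 2 * delta)) as [N HN]. exists N. intros i hi. left. now apply HN. }
  destruct (gprod_infty dist o x y) as [r| |]; [| easy |].
  - specialize (all (r + 1)). simpl in all. lra.
  - destruct (all 0).
Qed.

End BoundaryProducts.

Definition cone_height {Z : Type} (p : cone Z) : R :=
  match p with None => 0 | Some (_, t) => pos t end.

(* The vertex gets the arbitrary base point [z0]; its height [0] makes the choice irrelevant. *)
Definition cone_base {Z : Type} (z0 : Z) (p : cone Z) : Z :=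
  match p with None => z0 | Some (z, _) => z end.

Definition cone_angle {Z : Type} (d : Z -> Z -> R) (D : R) (z z' : Z) : R := PI / D * d z z'.

Lemma cone_height_nonneg {Z : Type} (p : cone Z) : 0 <= cone_height p.
Proof. destruct p as [[z [t ht]]|]; simpl; lra. Qed.

Lemma cone_dist_vertex {Z : Type} (d : Z -> Z -> R) (D : R) (p : cone Z) :
  cone_dist d D p vertex = cone_height p.
Proof. now destruct p as [[z t]|]. Qed.

Lemma cone_dist_model {Z : Type} (d : Z -> Z -> R) (D : R) (z0 : Z) (p q : cone Z) :
  cone_dist d D p q = arcosh (cosh_side (cone_height p) (cone_height q)
                                (1 - cos (cone_angle d D (cone_base z0 p) (cone_base z0 q)))).
Proof.
  unfold cosh_side, cone_angle.
  destruct p as [[z [t ht]]|], q as [[z' [t' ht']]|]; simpl; rewrite ?cosh_0, ?sinh_0.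
  - f_equal. ring.
  - rewrite <- (arcosh_cosh t) at 1 by lra. f_equal. ring.
  - rewrite <- (arcosh_cosh t') at 1 by lra. f_equal. ring.
  - rewrite <- (arcosh_cosh 0) at 1 by lra. rewrite cosh_0. f_equal. ring.
Qed.

Lemma cone_gprod {Z : Type} (d : Z -> Z -> R) (D : R) (z0 : Z) (p q : cone Z) :
  gprod (cone_dist d D) vertex p q
  = gprod_model (cone_height p) (cone_height q)
      (1 - cos (cone_angle d D (cone_base z0 p) (cone_base z0 q))).
Proof. unfold gprod, gprod_model. now rewrite !cone_dist_vertex, (cone_dist_model d D z0). Qed.

Lemma cone_height_ray {Z : Type} (z : Z) n : cone_height (ray_pt z n) = INR n.
Proof. now destruct n. Qed.

Lemma cone_base_ray {Z : Type} (z0 z : Z) n : (1 <= n)%nat -> cone_base z0 (ray_pt z n) = z.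
Proof. intros. destruct n; [lia | reflexivity]. Qed.

Section Cone.

Variables (Z : Type) (d : Z -> Z -> R) (D : R).
Hypothesis Hmet : is_metric d.
Hypothesis Hdiam : is_lub (fun r => exists z z' : Z, r = d z z') D.
Hypothesis HDpos : 0 < D.

Lemma metric_self z : d z z = 0.
Proof. now apply Hmet. Qed.

Lemma metric_nonneg z z' : 0 <= d z z'.
Proof.
  destruct Hmet as (_ & hsym & htri). pose proof (htri z z' z).
  rewrite (hsym z' z), metric_self in H. lra.
Qed.

Lemma cone_dist_sym (p q : cone Z) : cone_dist d D p q = cone_dist d D q p.
Proof.
  destruct Hmet as (_ & hsym & _).
  destruct p as [[z t]|], q as [[z' t']|]; simpl; auto.
  rewrite hsym. f_equal. ring.
Qed.

Lemma cone_angle_range z z' : 0 <= cone_angle d D z z' <= PI.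
Proof.
  unfold cone_angle. pose proof (metric_nonneg z z'). pose proof PI_RGT_0.
  assert (d z z' <= D) by (apply (proj1 Hdiam); eauto).
  split; [apply Rmult_le_pos; [apply Rlt_le, Rdiv_lt_0_compat|]; lra|].
  apply (Rmult_le_reg_r D); [lra|].
  replace (PI / D * d z z' * D) with (PI * d z z') by (field; lra). nra.
Qed.

Lemma cone_angle_triangle z1 z2 z3 :
  cone_angle d D z1 z3 <= cone_angle d D z1 z2 + cone_angle d D z2 z3.
Proof.
  unfold cone_angle. destruct Hmet as (_ & _ & htri). pose proof (htri z1 z2 z3).
  assert (0 < PI / D) by (apply Rdiv_lt_0_compat; [exact PI_RGT_0 | lra]). nra.
Qed.

Lemma inhabited_of_diam_pos : inhabited Z.
Proof.
  destruct (classic (inhabited Z)) as [|hZ]; [easy|].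
  assert (D <= 0); [|lra].
  apply (proj2 Hdiam). intros r (z & _ & _). exfalso. exact (hZ (inhabits z)).
Qed.

Lemma cone_hyperbolic_at_of_H2 (delta : R) :
  gromov_hyperbolic H2dist delta -> hyperbolic_at (cone_dist d D) vertex delta.
Proof.
  intros hH2 p q r. destruct inhabited_of_diam_pos as [z0]. rewrite !(cone_gprod d D z0).
  apply (gprod_model_hyperbolic_of_H2 delta hH2); auto using cone_height_nonneg, cone_angle_range.
  apply cone_angle_triangle.
Qed.

Lemma cone_gromov_hyperbolic : gromov_hyperbolic (cone_dist d D) delta_H2.
Proof.
  exists vertex. intros p q r.
  enough (Rmin (gprod (cone_dist d D) vertex p q) (gprod (cone_dist d D) vertex q r)
          - gprod (cone_dist d D) vertex p r <= delta_H2) by lra.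
  apply le_delta_H2. intros delta hH2.
  pose proof (cone_hyperbolic_at_of_H2 delta hH2 p q r). lra.
Qed.

Lemma gprod_cone_self (p : cone Z) : gprod (cone_dist d D) vertex p p = cone_height p.
Proof.
  destruct inhabited_of_diam_pos as [z0]. rewrite (cone_gprod d D z0).
  unfold cone_angle. rewrite metric_self, Rmult_0_r, cos_0, Rminus_eq_0.
  rewrite gprod_model_gap_0, Rmin_left by (auto using cone_height_nonneg; lra). reflexivity.
Qed.

Lemma gprod_rays (z z' : Z) i j : (1 <= i)%nat -> (1 <= j)%nat ->
  gprod (cone_dist d D) vertex (ray_pt z i) (ray_pt z' j)
  = gprod_model (INR i) (INR j) (1 - cos (cone_angle d D z z')).
Proof.
  intros hi hj. rewrite (cone_gprod d D z), !cone_height_ray, !cone_base_ray by exact hi || exact hj.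
  reflexivity.
Qed.

Lemma rays_conv_infty (z : Z) : conv_infty (cone_dist d D) vertex (ray_pt z).
Proof.
  intros M. destruct (INR_unbounded M) as [N HN]. exists (max 1 N). intros i j hi hj.
  rewrite gprod_rays by lia. unfold cone_angle.
  rewrite metric_self, Rmult_0_r, cos_0, Rminus_eq_0, gprod_model_gap_0 by apply pos_INR.
  apply Rmin_glb_lt; apply Rlt_le_trans with (INR N); auto; apply le_INR; lia.
Qed.

Lemma exp_gprod_rays_bounds (z z' : Z) i : (1 <= i)%nat ->
  (1 - cos (cone_angle d D z z')) / 16
  <= exp (-2 * gprod (cone_dist d D) vertex (ray_pt z i) (ray_pt z' i))
  <= 2 * exp (-2 * INR i) + (1 - cos (cone_angle d D z z')) / 2.
Proof.
  intros hi. rewrite gprod_rays by exact hi. pose proof (COS_bound (cone_angle d D z z')).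
  assert (1 <= INR i) by (apply (le_INR 1); exact hi).
  split; [apply exp_gprod_model_lower; lra|].
  pose proof (exp_gprod_model_upper (INR i) (INR i) (1 - cos (cone_angle d D z z'))
                ltac:(lra) ltac:(lra) ltac:(lra)). lra.
Qed.

Lemma cone_angle_pos z z' : z <> z' -> 0 < cone_angle d D z z'.
Proof.
  intros hzz'. unfold cone_angle. apply Rmult_lt_0_compat.
  - apply Rdiv_lt_0_compat; [exact PI_RGT_0 | lra].
  - destruct (metric_nonneg z z') as [|h]; [easy|]. exfalso. now apply hzz', Hmet.
Qed.

Lemma seq_equiv_rays_eq (z z' : Z) :
  seq_equiv (cone_dist d D) vertex (ray_pt z) (ray_pt z') -> z = z'.
Proof.
  intros hequiv. destruct (classic (z = z')) as [|hzz']; [easy|]. exfalso.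
  pose proof (cone_angle_pos z z' hzz').
  pose proof (one_sub_cos_bounds _ (cone_angle_range z z')) as [hs _].
  destruct (hequiv (- ln ((1 - cos (cone_angle d D z z')) / 16) / 2)) as [N HN].
  pose proof (HN (S N) ltac:(lia)).
  pose proof (exp_gprod_rays_bounds z z' (S N) ltac:(lia)) as [low _].
  set (s := 1 - cos (cone_angle d D z z')) in *.
  assert (0 < s) by nra.
  apply le_exp_neg2_iff in low; lra.
Qed.

Lemma gprod_infty_rays (z z' : Z) : z <> z' ->
  exists r, gprod_infty (cone_dist d D) vertex (ray_pt z) (ray_pt z') = Finite r /\
    cone_angle d D z z' / 16 <= exp (- r) <= exp (2 * delta_proxy) * cone_angle d D z z'.
Proof.
  intros hzz'. pose proof (cone_angle_pos z z' hzz').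
  pose proof (one_sub_cos_bounds _ (cone_angle_range z z')) as [hs1 hs2].
  set (th := cone_angle d D z z') in *. set (s := 1 - cos th) in *.
  assert (0 < s) by nra.
  assert (up : Rbar_le (gprod_infty (cone_dist d D) vertex (ray_pt z) (ray_pt z'))
                       (- ln (s / 16) / 2)).
  { eapply Rbar_le_trans; [apply gprod_infty_le_LimInf; apply rays_conv_infty|].
    rewrite <- (LimInf_seq_const (- ln (s / 16) / 2)). apply LimInf_le.
    exists 1%nat. intros i hi. apply le_exp_neg2_iff; [lra|].
    apply (exp_gprod_rays_bounds z z' i hi). }
  assert (low : Rbar_le (- ln s / 2 - 2 * delta_proxy)
                        (gprod_infty (cone_dist d D) vertex (ray_pt z) (ray_pt z'))).
  { apply gprod_infty_ge; [exact cone_dist_sym | exact (cone_hyperbolic_at_of_H2 _ H2_hyperbolic)|].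
    destruct (INR_unbounded (- ln (s / 4) / 2)) as [N HN]. exists (max 1 N). intros i hi.
    apply exp_neg2_le_iff; [lra|].
    pose proof (exp_gprod_rays_bounds z z' i ltac:(lia)) as [_ hup]. fold th s in hup.
    assert (exp (-2 * INR i) < s / 4); [|lra].
    apply exp_neg2_lt_iff; [lra|]. apply Rlt_le_trans with (INR N); [exact HN|].
    apply le_INR. lia. }
  destruct (gprod_infty (cone_dist d D) vertex (ray_pt z) (ray_pt z')) as [r| |];
    simpl in up, low; try easy.
  exists r. split; [reflexivity|].
  assert (sq : exp (-2 * r) = exp (- r) * exp (- r)) by (rewrite <- exp_plus; f_equal; ring).
  assert (exp (2 * (2 * delta_proxy)) = exp (2 * delta_proxy) * exp (2 * delta_proxy))
    by (rewrite <- exp_plus; f_equal; ring).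
  apply le_exp_neg2_iff in up; [|lra].
  assert (exp (-2 * r) <= exp (2 * (2 * delta_proxy)) * s).
  { rewrite <- (exp_ln s), <- exp_plus by lra. apply exp_le. lra. }
  pose proof (exp_pos (-r)). pose proof (exp_pos (2 * delta_proxy)).
  split; apply Rsqr_incr_0_var; unfold Rsqr; nra.
Qed.

Lemma rays_visual : exists c1 c2 : R, 0 < c1 /\ 0 < c2 /\
  forall z z' : Z,
    c1 * exp_neg (gprod_infty (cone_dist d D) vertex (ray_pt z) (ray_pt z')) <= d z z' /\
    d z z' <= c2 * exp_neg (gprod_infty (cone_dist d D) vertex (ray_pt z) (ray_pt z')).
Proof.
  pose proof PI_RGT_0. pose proof (exp_pos (2 * delta_proxy)).
  exists (D / (PI * exp (2 * delta_proxy))), (16 * D / PI).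
  split; [apply Rdiv_lt_0_compat; nra|]. split; [apply Rdiv_lt_0_compat; lra|].
  intros z z'. destruct (classic (z = z')) as [<-|hzz'].
  - rewrite (gprod_infty_equiv _ _ _ delta_proxy cone_dist_sym
               (cone_hyperbolic_at_of_H2 _ H2_hyperbolic)), metric_self
      by exact (conv_infty_seq_equiv_refl _ _ _ _ (rays_conv_infty z)).
    simpl. lra.
  - destruct (gprod_infty_rays z z' hzz') as (r & -> & hlow & hup). simpl.
    unfold cone_angle in hlow, hup.
    split.
    + apply (Rmult_le_reg_l (PI * exp (2 * delta_proxy))); [nra|].
      replace (PI * exp (2 * delta_proxy) * (D / (PI * exp (2 * delta_proxy)) * exp (- r)))
        with (D * exp (- r)) by (field; lra).
      replace (PI * exp (2 * delta_proxy) * d z z')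
        with (D * (exp (2 * delta_proxy) * (PI / D * d z z'))) by (field; lra).
      apply Rmult_le_compat_l; lra.
    + apply (Rmult_le_reg_l (PI / (16 * D))); [apply Rdiv_lt_0_compat; lra|].
      replace (PI / (16 * D) * (16 * D / PI * exp (- r))) with (exp (- r)) by (field; lra).
      replace (PI / (16 * D) * d z z') with (PI / D * d z z' / 16) by (field; lra). lra.
Qed.

Lemma cone_height_large (x : nat -> cone Z) : conv_infty (cone_dist d D) vertex x ->
  forall M, exists N, forall i, (N <= i)%nat -> M < cone_height (x i).
Proof.
  intros hx M. destruct (hx M) as [N HN]. exists N. intros i hi.
  rewrite <- gprod_cone_self. now apply Rgt_lt, HN.
Qed.

(* Both heights exceed 1, so [exp (-2 (x_m|x_n))] bounds the gap, hence the angle, from above. *)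
Lemma cone_base_cauchy (z0 : Z) (x : nat -> cone Z) : conv_infty (cone_dist d D) vertex x ->
  forall eta, 0 < eta -> exists N, forall m n, (N <= m)%nat -> (N <= n)%nat ->
    d (cone_base z0 (x m)) (cone_base z0 (x n)) < eta.
Proof.
  intros hx eta heta. pose proof PI_RGT_0.
  assert (0 < PI / D) by (apply Rdiv_lt_0_compat; lra).
  set (eps := (PI / D * eta) ^ 2 / 256).
  assert (0 < eps) by (unfold eps; assert (0 < PI / D * eta) by nra; nra).
  destruct (hx (Rmax 1 (- ln eps / 2))) as [N HN]. exists N. intros m n hm hn.
  pose proof (HN m m hm hm) as hxm. pose proof (HN n n hn hn) as hxn. pose proof (HN m n hm hn) as hmn.
  rewrite gprod_cone_self in hxm, hxn. rewrite (cone_gprod d D z0) in hmn.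
  pose proof (Rmax_l 1 (- ln eps / 2)). pose proof (Rmax_r 1 (- ln eps / 2)).
  pose proof (cone_angle_range (cone_base z0 (x m)) (cone_base z0 (x n))) as hth.
  pose proof (one_sub_cos_bounds _ hth) as [hs _].
  set (th := cone_angle d D (cone_base z0 (x m)) (cone_base z0 (x n))) in *.
  pose proof (exp_gprod_model_lower (cone_height (x m)) (cone_height (x n)) (1 - cos th)
                ltac:(lra) ltac:(lra) ltac:(nra)).
  assert (exp (-2 * gprod_model (cone_height (x m)) (cone_height (x n)) (1 - cos th)) < eps)
    by (apply exp_neg2_lt_iff; lra).
  assert (th ^ 2 < (PI / D * eta) ^ 2) by (unfold eps in *; lra).
  assert (0 < PI / D * eta) by nra.
  assert (th < PI / D * eta) by nra.
  apply (Rmult_lt_reg_l (PI / D)); assumption.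
Qed.

(* Heights, ray parameters and angles are chosen so that each of the three terms of
   [exp_gprod_model_upper] is below [exp (-2 M) / 3]. *)
Lemma cone_seq_equiv_ray (z0 z : Z) (x : nat -> cone Z) : conv_infty (cone_dist d D) vertex x ->
  (forall eps, 0 < eps -> exists N, forall n, (N <= n)%nat -> d (cone_base z0 (x n)) z < eps) ->
  seq_equiv (cone_dist d D) vertex x (ray_pt z).
Proof.
  intros hx hz M. pose proof PI_RGT_0.
  set (eps := exp (-2 * M)). assert (0 < eps) by apply exp_pos.
  destruct (cone_height_large x hx (- ln (eps / 3) / 2)) as [N1 H1].
  destruct (INR_unbounded (- ln (eps / 3) / 2)) as [N2 H2].
  destruct (hz (D / PI * sqrt (2 * eps / 3))) as [N3 H3].
  { apply Rmult_lt_0_compat; [apply Rdiv_lt_0_compat; lra | apply sqrt_lt_R0; lra]. }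
  exists (max 1 (max N1 (max N2 N3))). intros i hi.
  specialize (H1 i ltac:(lia)). specialize (H3 i ltac:(lia)).
  assert (INR N2 <= INR i) by (apply le_INR; lia).
  rewrite (cone_gprod d D z0), cone_height_ray, cone_base_ray by lia.
  pose proof (cone_angle_range (cone_base z0 (x i)) z) as hth.
  pose proof (one_sub_cos_bounds _ hth) as [_ hs].
  set (th := cone_angle d D (cone_base z0 (x i)) z) in *.
  pose proof (exp_gprod_model_upper (cone_height (x i)) (INR i) (1 - cos th)
                (cone_height_nonneg _) (pos_INR i) ltac:(pose proof (COS_bound th); lra)).
  assert (exp (-2 * cone_height (x i)) < eps / 3) by (apply exp_neg2_lt_iff; lra).
  assert (exp (-2 * INR i) < eps / 3) by (apply exp_neg2_lt_iff; lra).
  assert (th < sqrt (2 * eps / 3)).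
  { unfold th, cone_angle. apply (Rmult_lt_reg_l (D / PI)); [apply Rdiv_lt_0_compat; lra|].
    replace (D / PI * (PI / D * d (cone_base z0 (x i)) z)) with (d (cone_base z0 (x i)) z)
      by (field; lra). exact H3. }
  pose proof (sqrt_sqrt (2 * eps / 3) ltac:(lra)).
  assert (th ^ 2 < 2 * eps / 3) by nra.
  replace M with (- ln eps / 2) by (unfold eps; rewrite ln_exp; field).
  apply Rlt_gt, exp_neg2_lt_iff; lra.
Qed.

Lemma cone_boundary_rays : complete_metric d ->
  forall x : nat -> cone Z, conv_infty (cone_dist d D) vertex x ->
  exists z : Z, seq_equiv (cone_dist d D) vertex x (ray_pt z).
Proof.
  intros hcomplete x hx. destruct inhabited_of_diam_pos as [z0].
  destruct (hcomplete _ (cone_base_cauchy z0 x hx)) as [z hz].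
  exists z. exact (cone_seq_equiv_ray z0 z x hx hz).
Qed.

End Cone.

Theorem proposition6p1 (Z : Type) (d : Z -> Z -> R) (D : R)
  (Hmet : is_metric d)
  (Hdiam : is_lub (fun r => exists z z' : Z, r = d z z') D)
  (HDpos : 0 < D) :
  let Y := cone Z in
  let dY := cone_dist d D in
  let o : Y := vertex in
  gromov_hyperbolic dY delta_H2 /\
  (forall z : Z, conv_infty dY o (ray_pt z)) /\
  (forall z z' : Z, seq_equiv dY o (ray_pt z) (ray_pt z') -> z = z') /\
  (exists c1 c2 : R, 0 < c1 /\ 0 < c2 /\
     forall z z' : Z,
       c1 * exp_neg (gprod_infty dY o (ray_pt z) (ray_pt z')) <= d z z' /\
       d z z' <= c2 * exp_neg (gprod_infty dY o (ray_pt z) (ray_pt z'))) /\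
  (complete_metric d ->
     forall x : nat -> Y, conv_infty dY o x ->
       exists z : Z, seq_equiv dY o x (ray_pt z)).
Proof.
  intros Y dY o. split; [|split; [|split; [|split]]].
  - exact (cone_gromov_hyperbolic Z d D Hmet Hdiam HDpos).
  - exact (rays_conv_infty Z d D Hmet).
  - exact (seq_equiv_rays_eq Z d D Hmet Hdiam HDpos).
  - exact (rays_visual Z d D Hmet Hdiam HDpos).
  - exact (cone_boundary_rays Z d D Hmet Hdiam HDpos).
Qed.
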